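(* For all integers $m\ge0$: (i) for all $n\ge0$, $r_{2n}(-q^m,q)=(q;q^2)_n\,T_m(1,-q^{2n},q)$; (ii) for all $n\ge1$, $r_{2n-1}(-q^m,q)=(q;q^2)_n\,U_{m-1}(1,-q^{2n},q)$; (iii) for all $n\ge0$, $r_n(q^{2m+1},q^2)=(-q;q)_n\,V_m(1,-q^n,-q)$.
   Context: $q$ is an indeterminate. $(x;q)_n=\prod_{j=0}^{n-1}(1-q^jx)$; the Gaussian binomial coefficient is $\begin{bmatrix} n\\ j\end{bmatrix}_q=\frac{(q;q)_n}{(q;q)_j(q;q)_{n-j}}$ for $0\le j\le n$ and $0$ otherwise; $r_n(s,q)=\sum_{j=0}^n\begin{bmatrix} n\\ j\end{bmatrix}_q s^j$. The $q$-Chebyshev polynomials are defined by recurrences in $m$: $T_0(x,s,q)=1$, $T_1(x,s,q)=x$, $T_m(x,s,q)=(1+q^{m-1})xT_{m-1}(x,s,q)+q^{m-1}sT_{m-2}(x,s,q)$ for $m\ge2$; $U_{-1}(x,s,q)=0$, $U_0(x,s,q)=1$, $U_m(x,s,q)=(1+q^m)xU_{m-1}(x,s,q)+q^{m-1}sU_{m-2}(x,s,q)$ for $m\ge1$; $V_0(x,s,q)=1$, $V_1(x,s,q)=(1+q)x+qs$, $V_m(x,s,q)=(1+q^{2m-1})xV_{m-1}(x,s,q)-q^{2m-1}s^2V_{m-2}(x,s,q)$ for $m\ge2$. In (iii), $V_m(1,-q^n,-q)$ means $V_m(x,s,p)$ evaluated at $x=1$, $s=-q^n$, $p=-q$. 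*)

From HB Require Import structures.
From mathcomp Require Import all_boot all_order all_algebra.
From mathcomp Require Import fraction.
Set Implicit Arguments. Unset Strict Implicit. Unset Printing Implicit Defensive.
Import Order.TTheory GRing.Theory Num.Theory.
Local Open Scope ring_scope.

Section QDefs.
Variable F : fieldType.

Definition qpoch (x q : F) (n : nat) : F := \prod_(j < n) (1 - q ^+ j * x).

Definition gauss (q : F) (n j : nat) : F :=
  if (j <= n)%N then qpoch q q n / (qpoch q q j * qpoch q q (n - j)) else 0.

Definition rpoly (n : nat) (s q : F) : F := \sum_(j < n.+1) gauss q n j * s ^+ j.

Fixpoint qT (x s q : F) (m : nat) {struct m} : F :=
  match m with
  | 0 => 1
  | 1 => x
  | S (S k as k1) => (1 + q ^+ k1) * x * qT x s q k1 + q ^+ k1 * s * qT x s q k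
  end.

(* qUm1 x s q m = U_{m-1}(x,s,q); i.e. qUm1 0 = U_{-1} = 0, qUm1 1 = U_0 = 1,
   and U_{k+1} = (1+q^{k+1}) x U_k + q^k s U_{k-1}. *)
Fixpoint qUm1 (x s q : F) (m : nat) {struct m} : F :=
  match m with
  | 0 => 0
  | 1 => 1
  | S (S k as k1) => (1 + q ^+ k1) * x * qUm1 x s q k1 + q ^+ k * s * qUm1 x s q k
  end.

Definition qU (x s q : F) (m : nat) : F := qUm1 x s q m.+1.

Fixpoint qV (x s q : F) (m : nat) {struct m} : F :=
  match m with
  | 0 => 1
  | 1 => (1 + q) * x + q * s
  | S (S k as k1) =>
      (1 + q ^+ (2 * k + 3)) * x * qV x s q k1 - q ^+ (2 * k + 3) * s ^+ 2 * qV x s q k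
  end.
End QDefs.

(* The field Q(q)-like base: fractions of integer polynomials, q the indeterminate. *)
Definition Kq : fieldType := {fraction {poly int}}.
Definition qX : Kq := @FracField.tofrac {poly int} 'X.

From mathcomp Require Import all_boot all_algebra.
From mathcomp Require Import fraction ring.
Set Implicit Arguments. Unset Strict Implicit. Unset Printing Implicit Defensive.
Import GRing.Theory.
Local Open Scope ring_scope.

(* Pascal's rule and the absorption identity for Gaussian binomials give
   r_{n+1}(s) = s r_n(s) + r_n(qs) and r_{n+1}(qs) = r_{n+1}(s) + (q^{n+1} - 1) s r_n(s).
   Along a geometric progression s = c q^k they combine into a second-order
   recurrence in k which, for c = -1, resp. c = q in base q^2, is the defining
   recurrence of T and U, resp. V.  Both sides thus agree once they agree for
   k = 0, 1; these initial values follow from r_{n+2}(-1) = (1 - q^{n+1}) r_n(-1)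
   and r_n(q, q^2) = (-q;q)_n.  The only property of q used is that it is not a
   root of unity. *)

Lemma eq_rec2 (T : Type) (f g : nat -> T) :
  f 0 = g 0 -> f 1 = g 1 ->
  (forall k, f k = g k -> f k.+1 = g k.+1 -> f k.+2 = g k.+2) ->
  forall k, f k = g k.
Proof.
move=> e0 e1 eS; suff fg k : f k = g k /\ f k.+1 = g k.+1 by move=> k; case: (fg k).
by elim: k => [|k [IHk IHk1]]; split=> //; apply: eS.
Qed.

Section QPochhammer.
Variable F : fieldType.

Lemma qpoch0 (x p : F) : qpoch x p 0 = 1.
Proof. by rewrite /qpoch big_ord0. Qed.

Lemma qpochS (x p : F) n : qpoch x p n.+1 = qpoch x p n * (1 - p ^+ n * x).
Proof. by rewrite /qpoch big_ord_recr. Qed.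

Lemma qTSS (x s p : F) k :
  qT x s p k.+2 = (1 + p ^+ k.+1) * x * qT x s p k.+1 + p ^+ k.+1 * s * qT x s p k.
Proof. by []. Qed.

Lemma qUm1SS (x s p : F) k :
  qUm1 x s p k.+2 = (1 + p ^+ k.+1) * x * qUm1 x s p k.+1 + p ^+ k * s * qUm1 x s p k.
Proof. by []. Qed.

Lemma qVSS (x s p : F) k : qV x s p k.+2 =
  (1 + p ^+ (2 * k + 3)) * x * qV x s p k.+1 - p ^+ (2 * k + 3) * s ^+ 2 * qV x s p k.
Proof. by []. Qed.

End QPochhammer.

Section QBinomial.
Variables (F : fieldType) (q : F).
Hypothesis q_nroot : forall k, q ^+ k.+1 != 1.

Lemma subr_qexpS_neq0 k : 1 - q ^+ k * q != 0.
Proof. by rewrite subr_eq0 eq_sym -exprSr q_nroot. Qed.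

Lemma qpoch_qq_neq0 n : qpoch q q n != 0.
Proof.
elim: n => [|n IHn]; first by rewrite qpoch0 oner_neq0.
by rewrite qpochS mulf_neq0 ?subr_qexpS_neq0.
Qed.

Lemma gauss_small n j : (n < j)%N -> gauss q n j = 0.
Proof. by move=> ltnj; rewrite /gauss leqNgt ltnj. Qed.

Lemma gauss0 n : gauss q n 0 = 1.
Proof. by rewrite /gauss subn0 qpoch0 mul1r divff ?qpoch_qq_neq0. Qed.

Lemma gaussn n : gauss q n n = 1.
Proof. by rewrite /gauss leqnn subnn qpoch0 mulr1 divff ?qpoch_qq_neq0. Qed.

Lemma gauss_addn j k : gauss q (j + k) j = qpoch q q (j + k) / (qpoch q q j * qpoch q q k).
Proof. by rewrite /gauss leq_addr addKn. Qed.

Lemma gaussS n j : gauss q n.+1 j.+1 = gauss q n j + q ^+ j.+1 * gauss q n j.+1.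
Proof.
case: (ltngtP j n) => [ltjn|ltnj|->]; last first.
- by rewrite !gaussn gauss_small ?mulr0 ?addr0.
- by rewrite !gauss_small ?mulr0 ?addr0 // ltnW.
have [k ->] : exists k, n = (j + k.+1)%N by exists (n - j.+1)%N; rewrite addnS -addSn subnKC.
rewrite -[(j + k.+1).+1]addSn gauss_addn gauss_addn -[(j + k.+1)%N]addSnnS gauss_addn.
rewrite addnS [qpoch _ _ (_ + _).+1]qpochS [qpoch _ _ j.+1]qpochS [qpoch _ _ k.+1]qpochS.
have -> : q ^+ (j.+1 + k) * q = q ^+ j.+1 * (q ^+ k * q) by rewrite -!exprSr -exprD addSn addnS.
by rewrite exprSr; field; rewrite !qpoch_qq_neq0 !subr_qexpS_neq0.
Qed.

Lemma mul_gauss_diag n j :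
  (1 - q ^+ n.+1) * gauss q n j = (1 - q ^+ j.+1) * gauss q n.+1 j.+1.
Proof.
case: (leqP j n) => [lejn|ltnj]; last by rewrite !gauss_small ?mulr0.
have [k ->] : exists k, n = (j + k)%N by exists (n - j)%N; rewrite subnKC.
rewrite -addSn !gauss_addn addSn [qpoch _ _ (_ + _).+1]qpochS [qpoch _ _ j.+1]qpochS !exprSr.
by field; rewrite !qpoch_qq_neq0 !subr_qexpS_neq0.
Qed.

Lemma rpoly0 s : rpoly 0 s q = 1.
Proof. by rewrite /rpoly big_ord1 gauss0 mulr1. Qed.

Lemma rpoly_recl n s : rpoly n s q = 1 + \sum_(i < n.+1) gauss q n i.+1 * s ^+ i.+1.
Proof.
by rewrite /rpoly big_ord_recl big_ord_recr /= gauss0 gauss_small // mul0r addr0 mulr1.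
Qed.

Lemma rpolyS n s : rpoly n.+1 s q = s * rpoly n s q + rpoly n (q * s) q.
Proof.
rewrite [rpoly n.+1 s q]/rpoly big_ord_recl gauss0 mulr1 (rpoly_recl n (q * s)).
rewrite /rpoly mulr_sumr addrCA -big_split; congr (_ + _); apply: eq_bigr => i _ /=.
by rewrite gaussS exprMn !exprS; ring.
Qed.

Lemma rpoly_scale n s :
  rpoly n.+1 (q * s) q = rpoly n.+1 s q + (q ^+ n.+1 - 1) * s * rpoly n s q.
Proof.
rewrite /rpoly !(big_ord_recl n.+1) gauss0 /= mulr_sumr -addrA -big_split; congr (_ + _).
apply: eq_bigr => i _ /=.
have -> : (q ^+ n.+1 - 1) * s * (gauss q n i * s ^+ i)
          = - ((1 - q ^+ n.+1) * gauss q n i) * s ^+ i.+1 by rewrite [s ^+ i.+1]exprS; ring.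
by rewrite mul_gauss_diag exprMn; ring.
Qed.

Lemma rpolySS n s :
  rpoly n.+2 s q = (1 + s) * rpoly n.+1 s q + (q ^+ n.+1 - 1) * s * rpoly n s q.
Proof. by rewrite rpolyS rpoly_scale; ring. Qed.

Lemma rpoly_geom_rec c n k :
  rpoly n (c * q ^+ k.+2) q = (1 - c * q ^+ k.+1) * rpoly n (c * q ^+ k.+1) q
                              + c * q ^+ (n + k).+1 * rpoly n (c * q ^+ k) q.
Proof.
set s := c * q ^+ k.
have -> : c * q ^+ k.+1 = q * s by rewrite /s exprS; ring.
have -> : c * q ^+ k.+2 = q * (q * s) by rewrite /s !exprS; ring.
have -> : c * q ^+ (n + k).+1 = q ^+ n.+1 * s by rewrite /s -addSn exprD; ring.
have -> : rpoly n (q * (q * s)) q = rpoly n.+1 (q * s) q - q * s * rpoly n (q * s) q.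
  by rewrite rpolyS; ring.
by rewrite rpoly_scale rpolyS; ring.
Qed.

Lemma rpolySS_N1 n : rpoly n.+2 (-1) q = (1 - q ^+ n.+1) * rpoly n (-1) q.
Proof. by rewrite rpolySS; ring. Qed.

Lemma rpoly_odd_N1 n : rpoly (2 * n).+1 (-1) q = 0.
Proof.
elim: n => [|n IHn]; first by rewrite rpolyS !rpoly0; ring.
by rewrite mulnS add2n rpolySS_N1 IHn mulr0.
Qed.

Lemma rpoly_even_N1 n : rpoly (2 * n) (-1) q = qpoch q (q ^+ 2) n.
Proof.
elim: n => [|n IHn]; first by rewrite rpoly0 qpoch0.
by rewrite mulnS add2n rpolySS_N1 IHn qpochS -exprM exprSr; ring.
Qed.

Lemma rpoly_Nq n : rpoly n (- q) q = rpoly n.+1 (-1) q + rpoly n (-1) q.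
Proof. by rewrite rpolyS mulrN1; ring. Qed.

Lemma rpoly_even_qT n m :
  rpoly (2 * n) (- q ^+ m) q = qpoch q (q ^+ 2) n * qT 1 (- q ^+ (2 * n)) q m.
Proof.
move: m; apply: eq_rec2 => [||k IH0 IH1].
- by rewrite expr0 rpoly_even_N1 mulr1.
- by rewrite expr1 rpoly_Nq rpoly_odd_N1 rpoly_even_N1 add0r mulr1.
rewrite -[- q ^+ k.+2]mulN1r rpoly_geom_rec !mulN1r IH0 IH1 qTSS.
by rewrite addnC -addSn (exprD q k.+1); ring.
Qed.

Lemma rpoly_odd_qUm1 n m : (1 <= n)%N ->
  rpoly (2 * n).-1 (- q ^+ m) q = qpoch q (q ^+ 2) n * qUm1 1 (- q ^+ (2 * n)) q m.
Proof.
case: n => [//|n] _; have e2n : (2 * n.+1 = (2 * n).+2)%N by rewrite mulnS add2n.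
rewrite e2n /=; move: m; apply: eq_rec2 => [||k IH0 IH1].
- by rewrite expr0 rpoly_odd_N1 mulr0.
- by rewrite expr1 rpoly_Nq rpoly_odd_N1 -e2n rpoly_even_N1 addr0 mulr1.
rewrite -[- q ^+ k.+2]mulN1r rpoly_geom_rec !mulN1r IH0 IH1 qUm1SS.
by rewrite addnC -addnS (exprD q k); ring.
Qed.

End QBinomial.

Section SquareBase.
Variables (F : fieldType) (q : F).
Hypothesis q_nroot : forall k, q ^+ k.+1 != 1.

Lemma sqr_nroot k : (q ^+ 2) ^+ k.+1 != 1.
Proof. by rewrite -exprM mulnS addSn q_nroot. Qed.

Lemma rpoly_q_sqr n : rpoly n q (q ^+ 2) = qpoch (- q) q n.
Proof.
move: n; apply: eq_rec2 => [||n IH0 IH1].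
- by rewrite (rpoly0 sqr_nroot) qpoch0.
- by rewrite (rpolyS sqr_nroot) !(rpoly0 sqr_nroot) qpochS qpoch0; ring.
rewrite (rpolySS sqr_nroot) IH0 IH1 !qpochS exprAC [q ^+ n.+1]exprS; ring.
Qed.

Lemma rpoly_qV n m :
  rpoly n (q ^+ (2 * m + 1)) (q ^+ 2) = qpoch (- q) q n * qV 1 (- q ^+ n) (- q) m.
Proof.
have oddE k : q ^+ (2 * k + 1) = q * (q ^+ 2) ^+ k by rewrite addn1 exprS exprM.
rewrite oddE; move: m; apply: eq_rec2 => [||k IH0 IH1].
- by rewrite expr0 mulr1 rpoly_q_sqr mulr1.
- have -> : rpoly n (q * (q ^+ 2) ^+ 1) (q ^+ 2)
            = rpoly n.+1 q (q ^+ 2) - q * rpoly n q (q ^+ 2).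
    by rewrite (rpolyS sqr_nroot) expr1 mulrC; ring.
  by rewrite !rpoly_q_sqr qpochS /=; ring.
rewrite (rpoly_geom_rec sqr_nroot) IH0 IH1 qVSS (exprD (- q)) exprM sqrrN.
rewrite -addnS (exprD (q ^+ 2)) sqrrN [(q ^+ n) ^+ 2]exprAC [(q ^+ 2) ^+ k.+1]exprS.
ring.
Qed.

End SquareBase.

Lemma qX_nroot k : qX ^+ k.+1 != 1.
Proof.
rewrite /qX -tofracXn -tofrac1 tofrac_eq.
apply/eqP => Xn_eq1; have := congr1 (fun p : {poly int} => size p) Xn_eq1.
by rewrite size_polyXn size_poly1.
Qed.

Theorem corollary2p2 (m : nat) :
  (forall n : nat,
     rpoly (2 * n) (- qX ^+ m) qX
     = qpoch qX (qX ^+ 2) n * qT 1 (- qX ^+ (2 * n)) qX m) /\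
  (forall n : nat, (1 <= n)%N ->
     rpoly (2 * n).-1 (- qX ^+ m) qX
     = qpoch qX (qX ^+ 2) n * qUm1 1 (- qX ^+ (2 * n)) qX m) /\
  (forall n : nat,
     rpoly n (qX ^+ (2 * m + 1)) (qX ^+ 2)
     = qpoch (- qX) qX n * qV 1 (- qX ^+ n) (- qX) m).
Proof.
split; [|split] => n.
- exact: rpoly_even_qT qX_nroot n m.
- exact: rpoly_odd_qUm1 qX_nroot n m.
- exact: rpoly_qV qX_nroot n m.
Qed.
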